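(* Consider any sequences generated by Algorithm 3 with parameters satisfying $\theta\le\left[\sigma\left(\frac4\mu+\nu\right)\right]^{-1}$, $\lambda\le\left[\frac{4\sigma\lambda_{\max}(\mathbf{W})}{\mu}\right]^{-1}$, $\beta\le\min\{\frac1\mu,\frac\nu3\}$, $\gamma\le\lambda_{\min}^+(\mathbf{W})\beta$. Let $\|(y,z)\|^2_{\mathbf{M}} := \frac1\theta\|y\|^2 + \frac1\lambda\|z\|^2_{\mathbf{W}^\dagger}$ for $y\in\mathbb{R}^{nd}$, $z\in\mathrm{range}(\mathbf{W})$. Then for every $k\ge0$, \[ \|(y^{k+1}-y^*,z^{k+1}-z^* )\|^2_{\mathbf{M}} \le \|(y^k-y^*,z^k-z^* )\|^2_{\mathbf{M}} - (\beta-2\nu)\|y^{k+1}-y^*\|^2 - \gamma\|z^{k+1}-z^*\|^2_{\mathbf{W}^\dagger} + \frac{2(1-\sigma)}\sigma\mathrm{D}_h\big((y_f^k,z_f^k),(y^*,z^* )\big) - \frac2\sigma\mathrm{D}_h\big((y_f^{k+1},z_f^{k+1}),(y^*,z^* )\big) - 2\langle x^{k+1}-x^*,y^{k+1}-y^*\rangle. \]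
   Context: $F:\mathbb{R}^{nd}\to\mathbb{R}$ is differentiable, $\mu$-strongly convex and $L$-smooth, $0<\mu\le L$. $\mathbf{W}$ is a symmetric positive semidefinite $nd\times nd$ matrix whose kernel is the consensus space $\{(x_1,\dots,x_n)\in(\mathbb{R}^d)^n:x_1=\dots=x_n\}$, with largest eigenvalue $\lambda_{\max}(\mathbf{W})$ and smallest positive eigenvalue $\lambda_{\min}^+(\mathbf{W})$; $\mathbf{W}^\dagger$ is the inverse of $\mathbf{W}$ restricted to $\mathrm{range}(\mathbf{W})$ and $\|z\|^2_{\mathbf{W}^\dagger}:=\langle\mathbf{W}^\dagger z,z\rangle$. $x^*$ is the unique minimizer of $F$ over $\ker(\mathbf{W})$; $y^*:=\nabla F(x^* )-\frac\mu2x^*$, $z^*:=-\nabla F(x^* )\in\mathrm{range}(\mathbf{W})$. $r(x):=F(x)-\frac\mu4\|x\|^2$, $h(y,z):=\frac1\mu\|y+z\|^2+\frac\nu2\|y\|^2$ (so $\nabla_yh(y,z)=\frac2\mu(y+z)+\nu y$, $\nabla_zh(y,z)=\frac2\mu(y+z)$). $\mathrm{D}_h(u,v):=h(u)-h(v)-\langle\nabla h(v),u-v\rangle$. Algorithm 3: given $x^0,y^0\in\mathbb{R}^{nd}$, $z^0\in\mathrm{range}(\mathbf{W})$, parameters $\eta,\theta,\lambda,\alpha,\beta,\gamma,\nu>0$, $\tau,\sigma\in(0,1)$, set $x_f^0=x^0$, $y_f^0=y^0$, $z_f^0=z^0$, and for $k\ge0$: $x_g^k=\tau x^k+(1-\tau)x_f^k$,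 $y_g^k=\sigma y^k+(1-\sigma)y_f^k$, $z_g^k=\sigma z^k+(1-\sigma)z_f^k$; $(x^{k+1},y^{k+1})$ satisfies $x^{k+1} = x^k + \eta\alpha(x_g^k-x^{k+1}) - \eta\nabla r(x_g^k) + \eta y^{k+1}$ and $y^{k+1} = y^k + \theta\beta(y_g^k - y^{k+1}) - \theta\nabla_y h(y_g^k,z_g^k) + \theta\nu y^{k+1} - \theta x^{k+1}$; $z^{k+1} = z^k + \lambda\gamma(z_g^k - z^{k+1}) - \lambda\mathbf{W}\nabla_z h(y_g^k,z_g^k)$; $x_f^{k+1}=x_g^k+\frac{2\tau}{2-\tau}(x^{k+1}-x^k)$, $y_f^{k+1}=y_g^k+\sigma(y^{k+1}-y^k)$, $z_f^{k+1}=z_g^k+\sigma(z^{k+1}-z^k)$. *)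

From HB Require Import structures.
From mathcomp Require Import all_boot all_order all_algebra.
From mathcomp Require Import all_classical all_reals all_analysis.
Set Implicit Arguments. Unset Strict Implicit. Unset Printing Implicit Defensive.
Import Order.TTheory GRing.Theory Num.Theory.
Import numFieldNormedType.Exports.
Local Open Scope ring_scope.

(* Vectors of R^{nd} are column vectors 'cV[R]_(n*d); the block of agent i,
   coordinate j, is entry (mxvec_index i j) = i*d + j. *)

Definition dotv (R : ringType) (N : nat) (u v : 'cV[R]_N) : R := (u^T *m v) 0 0.
Definition sqn (R : ringType) (N : nat) (u : 'cV[R]_N) : R := dotv u u.

Definition consensus (R : ringType) (n d : nat) (x : 'cV[R]_(n * d)) : Prop :=
  forall (i i' : 'I_n) (j : 'I_d), x (mxvec_index i j) 0 = x (mxvec_index i' j) 0.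

Definition in_range (R : ringType) (N : nat) (W : 'M[R]_N) (z : 'cV[R]_N) : Prop :=
  exists u : 'cV[R]_N, z = W *m u.

Definition is_range_inverse (R : ringType) (N : nat) (W Wd : 'M[R]_N) : Prop :=
  forall z, in_range W z -> in_range W (Wd *m z) /\ W *m (Wd *m z) = z.

Definition sqn_dag (R : ringType) (N : nat) (Wd : 'M[R]_N) (z : 'cV[R]_N) : R :=
  dotv (Wd *m z) z.

Definition sqn_M (R : fieldType) (N : nat) (Wd : 'M[R]_N) (theta lambda : R)
  (y z : 'cV[R]_N) : R :=
  theta^-1 * sqn y + lambda^-1 * sqn_dag Wd z.

Definition has_gradient (R : realType) (N : nat) (F : 'cV[R]_N -> R)
  (gradF : 'cV[R]_N -> 'cV[R]_N) : Prop :=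
  forall x, differentiable F x /\ forall v, 'd F x v = dotv (gradF x) v.

Definition strongly_convex (R : realType) (N : nat) (F : 'cV[R]_N -> R)
  (gradF : 'cV[R]_N -> 'cV[R]_N) (mu : R) : Prop :=
  forall x y, F x + dotv (gradF x) (y - x) + mu / 2 * sqn (y - x) <= F y.

Definition L_smooth (R : realType) (N : nat)
  (gradF : 'cV[R]_N -> 'cV[R]_N) (L : R) : Prop :=
  forall x y, Num.sqrt (sqn (gradF x - gradF y)) <= L * Num.sqrt (sqn (x - y)).

(* r(x) = F(x) - mu/4 ||x||^2, grad r(x) = grad F(x) - mu/2 x *)
Definition grad_r (R : fieldType) (N : nat) (gradF : 'cV[R]_N -> 'cV[R]_N) (mu : R)
  (x : 'cV[R]_N) : 'cV[R]_N := gradF x - (mu / 2) *: x.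

Definition hfun (R : fieldType) (N : nat) (mu nu : R) (y z : 'cV[R]_N) : R :=
  mu^-1 * sqn (y + z) + nu / 2 * sqn y.
Definition grad_y_h (R : fieldType) (N : nat) (mu nu : R) (y z : 'cV[R]_N) : 'cV[R]_N :=
  (2 / mu) *: (y + z) + nu *: y.
Definition grad_z_h (R : fieldType) (N : nat) (mu : R) (y z : 'cV[R]_N) : 'cV[R]_N :=
  (2 / mu) *: (y + z).

Definition D_h (R : fieldType) (N : nat) (mu nu : R) (y z y' z' : 'cV[R]_N) : R :=
  hfun mu nu y z - hfun mu nu y' z'
  - (dotv (grad_y_h mu nu y' z') (y - y') + dotv (grad_z_h mu y' z') (z - z')).

Set Warnings "-notation-overridden,-ambiguous-paths,-notation-incompatible-prefix,-deprecated,-notation-incompatible-format".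
From HB Require Import structures.
From mathcomp Require Import all_boot all_order all_algebra.
From mathcomp Require Import all_classical all_reals all_analysis.
From mathcomp Require Import complex spectral sesquilinear.
From mathcomp Require Import ring lra.
Import Order.TTheory GRing.Theory Num.Theory.
Local Open Scope ring_scope.
Set Implicit Arguments. Unset Strict Implicit. Unset Printing Implicit Defensive.

(* Write Y = y - ys, Z = z - zs, X = x - xs for the errors relative to the
   saddle point (xs, ys, zs).  The y- and z-updates of Algorithm 3 keep their
   form in error coordinates, the gradients of h being shifted by xs.  The
   proof is then a computation in two geometries: the Euclidean one for y and
   the W^dagger one on range W for z.  In each, the three-point and
   polarization identities expand the new squared norm, the coupling identity
   of the quadratic h turns the gradient terms into values of h at the
   averaged points.  The estimate is closed by the nonnegativity of the
   remaining squares and by two inequalities, which are exactly where the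
   parameter conditions enter:
     2 sigma h(step) <= M-norm of the step,
     beta |Yg|^2 + gamma |Zg|^2_{W^dagger} <= 2 h(Yg, Zg). *)

Section InnerProduct.
Variables (R : realType) (N : nat).
Implicit Types (u v w : 'cV[R]_N) (a : R).

Lemma dotvE u v : dotv u v = \sum_i u i 0 * v i 0.
Proof. by rewrite /dotv !mxE; apply: eq_bigr => i _; rewrite mxE. Qed.

Lemma dotvC u v : dotv u v = dotv v u.
Proof. by rewrite !dotvE; apply: eq_bigr => i _; rewrite mulrC. Qed.

Lemma dotvDl u v w : dotv (u + v) w = dotv u w + dotv v w.
Proof. by rewrite !dotvE -big_split; apply: eq_bigr => i _; rewrite !mxE mulrDl. Qed.

Lemma dotvDr u v w : dotv w (u + v) = dotv w u + dotv w v.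
Proof. by rewrite !(dotvC w) dotvDl. Qed.

Lemma dotvZl a u v : dotv (a *: u) v = a * dotv u v.
Proof. by rewrite !dotvE mulr_sumr; apply: eq_bigr => i _; rewrite !mxE mulrA. Qed.

Lemma dotvZr a u v : dotv v (a *: u) = a * dotv v u.
Proof. by rewrite !(dotvC v) dotvZl. Qed.

Lemma dotvNl u v : dotv (- u) v = - dotv u v.
Proof. by rewrite -scaleN1r dotvZl mulN1r. Qed.

Lemma dotvNr u v : dotv v (- u) = - dotv v u.
Proof. by rewrite !(dotvC v) dotvNl. Qed.

Lemma sqn_ge0 u : 0 <= sqn u.
Proof. by rewrite /sqn dotvE; apply: sumr_ge0 => i _; rewrite -expr2 sqr_ge0. Qed.

Lemma dotv_mull (A : 'M[R]_N) u v : dotv (A *m u) v = dotv u (A^T *m v).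
Proof. by rewrite /dotv trmx_mul mulmxA. Qed.

Lemma sqn_three_point u v : sqn v = sqn u - sqn (v - u) + 2 * dotv v (v - u).
Proof.
by rewrite /sqn !(dotvDl, dotvDr, dotvNl, dotvNr) (dotvC u v); ring.
Qed.

Lemma sqnD_le u v : sqn (u + v) <= 2 * sqn u + 2 * sqn v.
Proof.
have := sqn_ge0 (u - v).
by rewrite /sqn !(dotvDl, dotvDr, dotvNl, dotvNr) (dotvC v u); lra.
Qed.

Lemma sqn_polar u v : 2 * dotv u (v - u) = sqn v - sqn u - sqn (v - u).
Proof. by rewrite /sqn !(dotvDl, dotvDr, dotvNl, dotvNr) (dotvC v u); ring. Qed.

End InnerProduct.

Ltac dotv_expand := rewrite ?(dotvDl, dotvDr, dotvNl, dotvNr, dotvZl, dotvZr).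

(* Spectral facts for a real symmetric matrix, obtained from the spectral
   theorem for complex hermitian matrices applied to its complexification. *)
Section Spectral.
Variables (R : realType) (N : nat).
Local Notation C := R[i].
Local Notation f := (real_complex R).
Local Open Scope sesquilinear_scope.

Lemma complex_realE (x : C) : x \is Num.real -> x = f (complex.Re x).
Proof.
case: x => a b; rewrite realE => /orP [] /=; rewrite lecE /= => /andP [/eqP].
  by move=> ->.
by move=> <-.
Qed.

Lemma real_complex_real (x : R) : f x \is Num.real.
Proof. by rewrite realE !lecE /= eqxx le_total. Qed.

Lemma complexified_spectral (W : 'M[R]_N) : W^T = W ->
  let Wc := map_mx f W in
  Wc = (spectralmx Wc)^t* *m diag_mx (spectral_diag Wc) *m spectralmx Wc /\
  spectral_diag Wc \is a realmx.
Proof.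
move=> Wsym Wc.
have Wc_sym : Wc \is symmetricmx.
  by apply/is_hermitianmxP; rewrite expr0 scale1r; apply/matrixP => p q;
     rewrite !mxE -{1}Wsym mxE.
have Wc_real : Wc \is a realmx by apply/mxOverP => p q; rewrite mxE real_complex_real.
split; last exact/hermitian_spectral_diag_real/(realsym_hermsym Wc_sym Wc_real).
rewrite -(invmx_unitary (spectral_unitarymx Wc)).
exact/orthomx_spectralP/(symmetric_normalmx Wc_sym Wc_real).
Qed.

Lemma spectral_diag_eigenvalue (W : 'M[R]_N) : W^T = W ->
  let s := spectral_diag (map_mx f W) in
  forall i, s 0 i = f (complex.Re (s 0 i)) /\ eigenvalue W (complex.Re (s 0 i)).
Proof.
move=> Wsym s i; pose Wc := map_mx f W; pose P := spectralmx Wc.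
have [hW sreal] : Wc = P^t* *m diag_mx s *m P /\ s \is a realmx :=
  complexified_spectral Wsym.
have Pu : P \is unitarymx := spectral_unitarymx Wc.
have si : s 0 i = f (complex.Re (s 0 i)) by apply/complex_realE/(mxOverP sreal).
split=> //; rewrite -(eigenvalue_map f).
suff : eigenvalue Wc (s 0 i) by rewrite {1}si.
apply/eigenvalueP; exists (row i P).
  rewrite -row_mul.
  have -> : P *m Wc = diag_mx s *m P.
    by rewrite hW !mulmxA (unitarymxP Pu) mul1mx.
  by apply/rowP => j; rewrite mul_diag_mx !mxE.
apply/eqP => P0; have := (row_unitarymxP Pu) i i.
by rewrite P0 eqxx dotmxE mul0mx mxE => /eqP; rewrite eq_sym oner_eq0.
Qed.

Lemma symmetric_quadratic_forms (W : 'M[R]_N) : W^T = W -> forall c : 'cV[R]_N,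
  exists w a : 'I_N -> R, [/\ forall i, 0 <= w i, forall i, eigenvalue W (a i),
    dotv c (W *m c) = \sum_i w i * a i & sqn (W *m c) = \sum_i w i * a i ^+ 2].
Proof.
move=> Wsym c; pose Wc := map_mx f W; pose P := spectralmx Wc.
pose s := spectral_diag Wc; pose cc := map_mx f c.
have [u uE] : exists u, u = P *m cc by exists (P *m cc).
have Pu : P \is unitarymx := spectral_unitarymx Wc.
have [hW _] : Wc = P^t* *m diag_mx s *m P /\ s \is a realmx :=
  complexified_spectral Wsym.
have uT : cc^T *m P^t* = u^t*.
  have ccr : cc^t* = cc^T.
    by apply/matrixP => p q; rewrite !mxE; apply/CrealP/real_complex_real.
  by rewrite uE trmx_mul map_mxM ccr.
have WW : Wc *m Wc = P^t* *m diag_mx s *m diag_mx s *m P.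
  by rewrite hW -!mulmxA (mulmxA P) (unitarymxP Pu) mul1mx.
pose w i := complex.Re (u i 0 * (u i 0)^*); pose a i := complex.Re (s 0 i).
have wE i : u i 0 * (u i 0)^* = f (w i).
  by apply/complex_realE/ger0_real; rewrite mul_conjC_ge0.
have aE i : s 0 i = f (a i) by have [] := spectral_diag_eigenvalue Wsym i.
have mf (X : 'M[R]_1) : f (X 0 0) = (map_mx f X) 0 0 by rewrite mxE.
have I1 : f (dotv c (W *m c)) = f (\sum_i w i * a i).
  rewrite /dotv mf map_mxM -map_trmx map_mxM -/Wc -/cc hW !mulmxA uT -(mulmxA _ P cc) -uE.
  rewrite rmorph_sum mxE; apply: eq_bigr => i _.
  rewrite mul_mx_diag !mxE aE.
  by transitivity (f (a i) * (u i 0 * (u i 0)^*)); [ring | rewrite wE rmorphM mulrC].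
have I2 : f (sqn (W *m c)) = f (\sum_i w i * a i ^+ 2).
  rewrite /sqn /dotv trmx_mul Wsym mf !map_mxM -map_trmx -/Wc -/cc.
  rewrite (mulmxA (cc^T *m Wc)) -(mulmxA (cc^T)) WW !mulmxA uT -(mulmxA _ P cc) -uE.
  rewrite rmorph_sum mxE; apply: eq_bigr => i _.
  rewrite !mul_mx_diag !mxE aE.
  transitivity (f (a i ^+ 2) * (u i 0 * (u i 0)^*)); first by rewrite rmorphXn; ring.
  by rewrite wE [RHS]rmorphM mulrC.
exists w, a; split.
- by move=> i; rewrite -lecR -wE mul_conjC_ge0.
- by move=> i; have [] := spectral_diag_eigenvalue Wsym i.
- exact: complexI I1.
- exact: complexI I2.
Qed.

End Spectral.

Lemma psd_eigenvalue_ge0 (R : realType) (N : nat) (W : 'M[R]_N) (a : R) :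
  (forall v : 'cV[R]_N, 0 <= (v^T *m W *m v) 0 0) -> eigenvalue W a -> 0 <= a.
Proof.
move=> psd /eigenvalueP [v vW vn0].
have vv_gt0 : 0 < (v *m v^T) 0 0.
  rewrite mxE lt_def; apply/andP; split; last first.
    by apply: sumr_ge0 => i _; rewrite mxE -expr2 sqr_ge0.
  apply: contra vn0 => /eqP vv0; apply/eqP/rowP => j.
  have sq_ge0 (i : 'I_N) : true -> 0 <= v 0 i * v^T i 0.
    by move=> _; rewrite mxE -expr2 sqr_ge0.
  have := psumr_eq0P sq_ge0 vv0 (i := j) isT.
  by rewrite mxE -expr2 => /eqP; rewrite sqrf_eq0 => /eqP ->; rewrite mxE.
have := psd v^T; rewrite trmxK vW -scalemxAl mxE.
by rewrite pmulr_lge0.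
Qed.

Lemma symmetric_psd_bounds (R : realType) (N : nat) (W : 'M[R]_N) (lmax lminp : R) :
  W^T = W -> (forall v : 'cV[R]_N, 0 <= (v^T *m W *m v) 0 0) ->
  (forall a, eigenvalue W a -> a <= lmax) ->
  (forall a, eigenvalue W a -> 0 < a -> lminp <= a) ->
  forall c : 'cV[R]_N, sqn (W *m c) <= lmax * dotv c (W *m c) /\
                       lminp * dotv c (W *m c) <= sqn (W *m c).
Proof.
move=> Wsym psd hmax hmin c.
have [w [a [w_ge0 eig -> ->]]] := symmetric_quadratic_forms Wsym c.
rewrite !mulr_sumr; split; apply: ler_sum => i _.
  have a_le : 0 <= lmax - a i by rewrite subr_ge0 hmax.
  have := mulr_ge0 (w_ge0 i) (mulr_ge0 (psd_eigenvalue_ge0 psd (eig i)) a_le).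
  by rewrite expr2; lra.
have := psd_eigenvalue_ge0 psd (eig i); rewrite le_eqVlt => /orP [/eqP <-|a_gt0].
  by rewrite !mulr0 expr0n /= mulr0.
have a_ge : 0 <= a i - lminp by rewrite subr_ge0 hmin.
have := mulr_ge0 (w_ge0 i) (mulr_ge0 (ltW a_gt0) a_ge).
by rewrite expr2; lra.
Qed.

Lemma L_smooth_sqn (R : realType) (N : nat) (gradF : 'cV[R]_N -> 'cV[R]_N) (L : R) :
  L_smooth gradF L -> forall x y, sqn (gradF x - gradF y) <= L ^+ 2 * sqn (x - y).
Proof.
move=> sm x y; have hle := sm x y.
have g_ge0 := sqrtr_ge0 (sqn (gradF x - gradF y)).
have := ler_pM g_ge0 g_ge0 hle hle.
by rewrite -!expr2 exprMn !sqr_sqrtr ?sqn_ge0.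
Qed.

Lemma ge0_of_small (R : realType) (g K : R) :
  0 <= K -> (forall t, 0 < t -> - (K * t) <= g) -> 0 <= g.
Proof.
move=> K0 H; rewrite leNgt; apply/negP => g0.
pose t := - g / (K + 1).
have t0 : 0 < t by rewrite /t divr_gt0 // ?oppr_gt0 //; lra.
have ht : t * (K + 1) = - g by rewrite /t; field; lra.
have := H t t0; nra.
Qed.

Section Optimality.
Variables (R : realType) (N : nat).
Variables (F : 'cV[R]_N -> R) (gradF : 'cV[R]_N -> 'cV[R]_N) (mu L : R).
Variables (W : 'M[R]_N) (xs : 'cV[R]_N).
Hypothesis F_sc : strongly_convex F gradF mu.
Hypothesis mu_gt0 : 0 < mu.
Hypothesis F_smooth : L_smooth gradF L.
Hypothesis W_xs : W *m xs = 0.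
Hypothesis xs_min : forall v, W *m v = 0 -> F xs <= F v.

(* Moving from [xs] along a direction [v] of ker W, the gradient points
   forward: by strong convexity and minimality of [xs],
   t <grad F(xs + t v), v> >= F(xs + t v) - F(xs) >= 0. *)
Lemma grad_along_kernel_ge0 v t : W *m v = 0 -> 0 < t ->
  0 <= dotv (gradF (xs + t *: v)) v.
Proof.
move=> Wv t0; pose x1 := xs + t *: v.
have Wx1 : W *m x1 = 0 by rewrite mulmxDr -scalemxAr Wv scaler0 W_xs addr0.
have e1 : xs - x1 = - (t *: v) by rewrite /x1 opprD addNKr.
have := F_sc x1 xs; rewrite e1 /sqn; dotv_expand; rewrite opprK.
have := xs_min Wx1; have := sqn_ge0 v; rewrite /sqn.
set d := dotv (gradF x1) v; set S := dotv v v => S0 Fmin hsc.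
have tS0 : 0 <= mu / 2 * (t * (t * S)).
  apply: mulr_ge0; first exact: divr_ge0 (ltW mu_gt0) (ler0n _ 2).
  exact: mulr_ge0 (ltW t0) (mulr_ge0 (ltW t0) S0).
by rewrite -(pmulr_rge0 _ t0); lra.
Qed.

Lemma grad_variation_le v t : 0 < t ->
  dotv (gradF (xs + t *: v) - gradF xs) v <= (L ^+ 2 + 1) * sqn v / 2 * t.
Proof.
move=> t0; have := L_smooth_sqn F_smooth (xs + t *: v) xs.
rewrite addrAC subrr add0r /sqn dotvZl dotvZr.
move: (gradF (xs + t *: v) - gradF xs) => p hp.
have := sqn_ge0 (p - t *: v); rewrite /sqn; dotv_expand; rewrite (dotvC v p).
move: hp; set P := dotv p p; set dp := dotv p v; set S := dotv v v => hp hq.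
have : 2 * t * dp <= 2 * t * ((L ^+ 2 + 1) * S / 2 * t).
  have -> : 2 * t * ((L ^+ 2 + 1) * S / 2 * t) = (L ^+ 2 + 1) * (t * t * S) by field.
  nra.
by rewrite ler_pM2l //; lra.
Qed.

(* Letting t -> 0 in the two previous bounds gives <grad F(xs), v> >= 0 on
   the subspace ker W, hence equality. *)
Lemma grad_orthogonal_kernel v : W *m v = 0 -> dotv (gradF xs) v = 0.
Proof.
suff ge0 w : W *m w = 0 -> 0 <= dotv (gradF xs) w.
  move=> Wv; apply/eqP; rewrite eq_le ge0 // andbT.
  by have := ge0 (- v); rewrite mulmxN Wv oppr0 dotvNr => /(_ erefl); lra.
move=> Ww; apply: (@ge0_of_small _ _ ((L ^+ 2 + 1) * sqn w / 2)).
  by apply: divr_ge0 => //; apply: mulr_ge0; rewrite ?sqn_ge0 ?addr_ge0 ?sqr_ge0.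
move=> t t0; have := grad_along_kernel_ge0 Ww t0; have := grad_variation_le w t0.
by rewrite dotvDl dotvNl; lra.
Qed.

End Optimality.

Lemma range_of_orth_kernel (R : realType) (N : nat) (W : 'M[R]_N) (g : 'cV[R]_N) :
  W^T = W -> (forall v, W *m v = 0 -> dotv g v = 0) -> in_range W g.
Proof.
move=> Wsym hg.
have : (g^T <= W)%MS.
  rewrite submxE; apply/eqP/matrixP => i k; rewrite [RHS]mxE.
  have Wk : W *m col k (cokermx W) = 0.
    apply/matrixP => a b; have := congr1 (fun M : 'M[R]_N => M a k) (mulmx_coker W).
    rewrite !mxE => h; apply: (etrans _ h).
    by apply: eq_bigr => j _; rewrite !mxE.
  have := hg _ Wk; rewrite dotvE => <-; rewrite mxE.
  by apply: eq_bigr => j _; rewrite !mxE (ord1 i).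
move=> /submxP [D hD]; exists D^T.
by rewrite -{1}Wsym -trmx_mul -hD trmxK.
Qed.

Lemma D_h_quadratic (R : realType) (N : nat) (mu nu : R) (y z y' z' : 'cV[R]_N) :
  0 < mu -> D_h mu nu y z y' z' = hfun mu nu (y - y') (z - z').
Proof.
move=> mu0; rewrite /D_h /hfun /grad_y_h /grad_z_h /sqn; dotv_expand.
rewrite (dotvC z y) (dotvC y' y) (dotvC z' y) (dotvC y' z) (dotvC z' z) (dotvC z' y').
by field; rewrite gt_eqF.
Qed.

(* The coupling identity behind the accelerated scheme: with the extrapolated
   point g = sigma u0 + (1 - sigma) uf and the new averaged point
   g + sigma (u1 - u0), the inner product of u1 with grad h(g) splits into
   values of the quadratic [h]. *)
Lemma grad_h_coupling (R : realType) (N : nat) (mu nu sigma : R)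
    (Y0 Yf Y1 Z0 Zf Z1 : 'cV[R]_N) :
  0 < mu -> 0 < sigma ->
  let Yg := sigma *: Y0 + (1 - sigma) *: Yf in
  let Zg := sigma *: Z0 + (1 - sigma) *: Zf in
  2 * dotv Y1 (grad_y_h mu nu Yg Zg) + 2 * dotv Z1 (grad_z_h mu Yg Zg) =
    (2 / sigma) * hfun mu nu (Yg + sigma *: (Y1 - Y0)) (Zg + sigma *: (Z1 - Z0))
    - (2 * (1 - sigma) / sigma) * hfun mu nu Yf Zf + 2 * hfun mu nu Yg Zg
    - 2 * sigma * hfun mu nu (Y1 - Y0) (Z1 - Z0)
    + (2 * (1 - sigma) / sigma) * hfun mu nu (Yf - Yg) (Zf - Zg).
Proof.
move=> mu0 sigma0 Yg Zg; rewrite /Yg /Zg /grad_y_h /grad_z_h /hfun /sqn; dotv_expand.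
rewrite ?(dotvC Yf Y0) ?(dotvC Y1 Y0) ?(dotvC Z0 Y0) ?(dotvC Zf Y0) ?(dotvC Z1 Y0)
  ?(dotvC Y1 Yf) ?(dotvC Z0 Yf) ?(dotvC Zf Yf) ?(dotvC Z1 Yf) ?(dotvC Z0 Y1)
  ?(dotvC Zf Y1) ?(dotvC Z1 Y1) ?(dotvC Zf Z0) ?(dotvC Z1 Z0) ?(dotvC Z1 Zf).
by field; rewrite ?gt_eqF.
Qed.

Section OneStep.
Variables (R : realType) (N : nat) (W Wd : 'M[R]_N) (lmax lminp : R).
Hypothesis W_sym : W^T = W.
Hypothesis W_psd : forall v : 'cV[R]_N, 0 <= (v^T *m W *m v) 0 0.
Hypothesis W_lmax : forall a, eigenvalue W a -> a <= lmax.
Hypothesis W_lminp : forall a, eigenvalue W a -> 0 < a -> lminp <= a.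
Hypothesis Wd_pinv : is_range_inverse W Wd.
Implicit Types (p q v : 'cV[R]_N).

Lemma rangeD p q : in_range W p -> in_range W q -> in_range W (p + q).
Proof. by move=> [u ->] [w ->]; exists (u + w); rewrite mulmxDr. Qed.

Lemma rangeZ a p : in_range W p -> in_range W (a *: p).
Proof. by move=> [u ->]; exists (a *: u); rewrite scalemxAr. Qed.

Lemma rangeB p q : in_range W p -> in_range W q -> in_range W (p - q).
Proof. by move=> hp hq; rewrite -scaleN1r; apply: rangeD => //; apply: rangeZ. Qed.

Lemma rangeW v : in_range W (W *m v).
Proof. by exists v. Qed.

Lemma dotv_pinv_W p v : in_range W p -> dotv (Wd *m p) (W *m v) = dotv p v.
Proof. by move=> hp; rewrite dotvC dotv_mull W_sym (Wd_pinv hp).2 dotvC. Qed.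

Lemma dotv_pinv_sym p q : in_range W p -> in_range W q ->
  dotv (Wd *m p) q = dotv (Wd *m q) p.
Proof. by move=> hp hq; rewrite -{1}(Wd_pinv hq).2 dotv_pinv_W // dotvC. Qed.

Lemma sqn_dag_bounds p : in_range W p ->
  [/\ 0 <= sqn_dag Wd p, sqn p <= lmax * sqn_dag Wd p & lminp * sqn_dag Wd p <= sqn p].
Proof.
move=> hp; have pE : p = W *m (Wd *m p) by rewrite (Wd_pinv hp).2.
have -> : sqn_dag Wd p = dotv (Wd *m p) (W *m (Wd *m p)) by rewrite /sqn_dag -pE.
have [le_max le_min] := symmetric_psd_bounds W_sym W_psd W_lmax W_lminp (Wd *m p).
rewrite [in sqn p]pE; split=> //; rewrite /dotv (mulmxA _ W); exact: W_psd.
Qed.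

Lemma sqn_dag_three_point p q : in_range W p -> in_range W q ->
  sqn_dag Wd q = sqn_dag Wd p - sqn_dag Wd (q - p) + 2 * dotv (Wd *m (q - p)) q.
Proof.
move=> hp hq; rewrite /sqn_dag !mulmxBr; dotv_expand.
by rewrite (dotv_pinv_sym hq hp); ring.
Qed.

Lemma sqn_dag_polar p q : in_range W p -> in_range W q ->
  2 * dotv (Wd *m (q - p)) p = sqn_dag Wd q - sqn_dag Wd p - sqn_dag Wd (q - p).
Proof.
move=> hp hq; rewrite /sqn_dag !mulmxBr; dotv_expand.
by rewrite (dotv_pinv_sym hp hq); ring.
Qed.

Variables (mu nu theta lambda beta gamma sigma : R).
Hypotheses (mu_gt0 : 0 < mu) (nu_gt0 : 0 < nu) (theta_gt0 : 0 < theta).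
Hypotheses (lambda_gt0 : 0 < lambda) (beta_gt0 : 0 < beta) (gamma_gt0 : 0 < gamma).
Hypotheses (sigma_gt0 : 0 < sigma) (sigma_lt1 : sigma < 1).
Hypothesis theta_le : theta <= (sigma * (4 / mu + nu))^-1.
Hypothesis lambda_le : lambda <= (4 * sigma * lmax / mu)^-1.
Hypothesis beta_le : beta <= Num.min (mu^-1) (nu / 3).
Hypothesis gamma_le : gamma <= lminp * beta.

Lemma hfun_ge0 (a b : 'cV[R]_N) : 0 <= hfun mu nu a b.
Proof.
by rewrite /hfun addr_ge0 // mulr_ge0 ?sqn_ge0 ?invr_ge0 ?divr_ge0 // ltW.
Qed.

Lemma hfun_le_M_norm (a b : 'cV[R]_N) : in_range W b ->
  2 * sigma * hfun mu nu a b <= theta^-1 * sqn a + lambda^-1 * sqn_dag Wd b.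
Proof.
move=> hb; have [sd_ge0 sd_max _] := sqn_dag_bounds hb.
have mu_inv_gt0 : 0 < mu^-1 by rewrite invr_gt0.
have theta_inv : sigma * (4 / mu + nu) <= theta^-1.
  by rewrite -invf_pge ?posrE // mulr_gt0 // addr_gt0 // divr_gt0.
have lambda_inv : 4 * sigma * lmax / mu <= lambda^-1.
  rewrite -invf_pge ?posrE //.
  by rewrite -invr_gt0; apply: lt_le_trans lambda_le.
have hab := sqnD_le a b; have A0 := sqn_ge0 a; have B0 := sqn_ge0 b.
have s1 : 2 * sigma * mu^-1 * sqn (a + b) <= 2 * sigma * mu^-1 * (2 * sqn a + 2 * sqn b).
  by rewrite ler_wpM2l // !mulr_ge0 // ltW.
have s2 : sigma * (4 / mu + nu) * sqn a <= theta^-1 * sqn a by rewrite ler_wpM2r.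
have s3 : 4 * sigma * mu^-1 * sqn b <= 4 * sigma * mu^-1 * (lmax * sqn_dag Wd b).
  by rewrite ler_wpM2l // !mulr_ge0 // ltW.
have s4 : 4 * sigma * lmax / mu * sqn_dag Wd b <= lambda^-1 * sqn_dag Wd b.
  by rewrite ler_wpM2r.
rewrite /hfun; lra.
Qed.

Lemma weights_le_hfun (a b : 'cV[R]_N) : in_range W b ->
  beta * sqn a + gamma * sqn_dag Wd b <= 2 * hfun mu nu a b.
Proof.
move=> hb; have [sd_ge0 _ sd_min] := sqn_dag_bounds hb.
have [beta_mu beta_nu] : beta <= mu^-1 /\ beta <= nu / 3.
  by move: beta_le; rewrite le_min => /andP [].
have t1 : gamma * sqn_dag Wd b <= lminp * beta * sqn_dag Wd b by rewrite ler_wpM2r.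
have t2 : beta * (lminp * sqn_dag Wd b) <= beta * sqn b by rewrite ler_wpM2l // ltW.
have hb2 : sqn b <= 2 * sqn (a + b) + 2 * sqn a.
  by have := sqnD_le (a + b) (- a); rewrite addrC addKr /sqn dotvNl dotvNr opprK.
have t3 : beta * sqn b <= beta * (2 * sqn (a + b) + 2 * sqn a) by rewrite ler_wpM2l // ltW.
have t4 : beta * sqn (a + b) <= mu^-1 * sqn (a + b) by rewrite ler_wpM2r // sqn_ge0.
have t5 : beta * sqn a <= nu / 3 * sqn a by rewrite ler_wpM2r // sqn_ge0.
rewrite /hfun; lra.
Qed.

Lemma one_step_descent (Y0 Yf Y1 Z0 Zf Z1 X1 : 'cV[R]_N) :
  in_range W Z0 -> in_range W Zf -> in_range W Z1 ->
  let Yg := sigma *: Y0 + (1 - sigma) *: Yf in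
  let Zg := sigma *: Z0 + (1 - sigma) *: Zf in
  Y1 - Y0 = (theta * beta) *: (Yg - Y1) - theta *: grad_y_h mu nu Yg Zg
            + (theta * nu) *: Y1 - theta *: X1 ->
  Z1 - Z0 = (lambda * gamma) *: (Zg - Z1) - lambda *: (W *m grad_z_h mu Yg Zg) ->
  sqn_M Wd theta lambda Y1 Z1
  <= sqn_M Wd theta lambda Y0 Z0 - (beta - 2 * nu) * sqn Y1 - gamma * sqn_dag Wd Z1
     + (2 * (1 - sigma) / sigma) * hfun mu nu Yf Zf
     - (2 / sigma) * hfun mu nu (Yg + sigma *: (Y1 - Y0)) (Zg + sigma *: (Z1 - Z0))
     - 2 * dotv X1 Y1.
Proof.
move=> hZ0 hZf hZ1 Yg Zg.
have hZg : in_range W Zg by apply: rangeD; apply: rangeZ.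
have := grad_h_coupling nu Y0 Yf Y1 Z0 Zf Z1 mu_gt0 sigma_gt0; rewrite /= -/Yg -/Zg.
move: (grad_y_h mu nu Yg Zg) (grad_z_h mu Yg Zg) => gy gz coupling hy hz.
have eY1 : theta^-1 * sqn Y1 = theta^-1 * sqn Y0 - theta^-1 * sqn (Y1 - Y0)
                              + 2 * (theta^-1 * dotv Y1 (Y1 - Y0)).
  by rewrite {1}(sqn_three_point Y0 Y1); ring.
have eY : theta^-1 * dotv Y1 (Y1 - Y0)
          = beta * dotv Y1 (Yg - Y1) - dotv Y1 gy + nu * sqn Y1 - dotv Y1 X1.
  by rewrite hy /sqn; dotv_expand; field; rewrite gt_eqF.
have polarY : 2 * (beta * dotv Y1 (Yg - Y1))
              = beta * sqn Yg - beta * sqn Y1 - beta * sqn (Yg - Y1).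
  by rewrite mulrCA sqn_polar; ring.
have eZ1 : lambda^-1 * sqn_dag Wd Z1 = lambda^-1 * sqn_dag Wd Z0
    - lambda^-1 * sqn_dag Wd (Z1 - Z0) + 2 * (lambda^-1 * dotv (Wd *m (Z1 - Z0)) Z1).
  by rewrite {1}(sqn_dag_three_point hZ0 hZ1); ring.
have eZ : lambda^-1 * dotv (Wd *m (Z1 - Z0)) Z1
          = gamma * dotv (Wd *m (Zg - Z1)) Z1 - dotv Z1 gz.
  rewrite hz mulmxBr -!scalemxAr; dotv_expand.
  rewrite (dotv_pinv_sym (rangeW gz) hZ1) dotv_pinv_W //.
  by field; rewrite gt_eqF.
have polarZ : 2 * (gamma * dotv (Wd *m (Zg - Z1)) Z1)
    = gamma * sqn_dag Wd Zg - gamma * sqn_dag Wd Z1 - gamma * sqn_dag Wd (Zg - Z1).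
  by rewrite mulrCA (sqn_dag_polar hZ1 hZg); ring.
have step_le := hfun_le_M_norm (Y1 - Y0) (rangeB hZ1 hZ0).
have weights_le := weights_le_hfun Yg hZg.
have gapY : 0 <= beta * sqn (Yg - Y1) by rewrite mulr_ge0 ?sqn_ge0 // ltW.
have gapZ : 0 <= gamma * sqn_dag Wd (Zg - Z1).
  by have [sd_ge0 _ _] := sqn_dag_bounds (rangeB hZg hZ1); rewrite mulr_ge0 // ltW.
have gapF : 0 <= (2 * (1 - sigma) / sigma) * hfun mu nu (Yf - Yg) (Zf - Zg).
  apply: mulr_ge0; last exact: hfun_ge0.
  by rewrite divr_ge0 ?mulr_ge0 ?subr_ge0 ?ltW.
rewrite /sqn_M (dotvC X1 Y1); lra.
Qed.

End OneStep.

Ltac entrywise := apply/matrixP => ? ?; rewrite !mxE.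

Lemma convex_shift (R : realType) (N : nat) (s : R) (a b c : 'cV[R]_N) :
  s *: (a - c) + (1 - s) *: (b - c) = s *: a + (1 - s) *: b - c.
Proof. by entrywise; ring. Qed.

Section GradientShift.
Variables (R : realType) (N : nat) (mu nu : R) (u v xs ys zs : 'cV[R]_N).
Hypotheses (mu_gt0 : 0 < mu) (ys_zs : ys + zs = - (mu / 2) *: xs).

Let zsE : zs = - (mu / 2) *: xs - ys.
Proof. by rewrite -ys_zs addrC addKr. Qed.

Lemma grad_y_h_shift :
  grad_y_h mu nu (u - ys) (v - zs) = grad_y_h mu nu u v + xs - nu *: ys.
Proof. by rewrite /grad_y_h zsE; entrywise; field; rewrite gt_eqF. Qed.

Lemma grad_z_h_shift : grad_z_h mu (u - ys) (v - zs) = grad_z_h mu u v + xs.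
Proof. by rewrite /grad_z_h zsE; entrywise; field; rewrite gt_eqF. Qed.

End GradientShift.

Section Algorithm3.
Variables (R : realType) (N : nat) (W : 'M[R]_N) (gradF : 'cV[R]_N -> 'cV[R]_N).
Variables (eta theta lambda alpha beta gamma mu nu tau sigma : R).
Variables (x y z xf yf zf xg yg zg : nat -> 'cV[R]_N).
Hypothesis mix : forall k,
  xg k = tau *: x k + (1 - tau) *: xf k /\
  yg k = sigma *: y k + (1 - sigma) *: yf k /\
  zg k = sigma *: z k + (1 - sigma) *: zf k.
Hypothesis xy_update : forall k,
  x k.+1 = x k + (eta * alpha) *: (xg k - x k.+1) - eta *: grad_r gradF mu (xg k)
           + eta *: y k.+1 /\
  y k.+1 = y k + (theta * beta) *: (yg k - y k.+1) - theta *: grad_y_h mu nu (yg k) (zg k)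
           + (theta * nu) *: y k.+1 - theta *: x k.+1.
Hypothesis z_update : forall k,
  z k.+1 = z k + (lambda * gamma) *: (zg k - z k.+1)
           - lambda *: (W *m grad_z_h mu (yg k) (zg k)).
Hypothesis f_update : forall k,
  xf k.+1 = xg k + (2 * tau / (2 - tau)) *: (x k.+1 - x k) /\
  yf k.+1 = yg k + sigma *: (y k.+1 - y k) /\
  zf k.+1 = zg k + sigma *: (z k.+1 - z k).
Hypotheses (lambda_gt0 : 0 < lambda) (gamma_gt0 : 0 < gamma) (mu_gt0 : 0 < mu).

(* The implicit z-update is explicitly solvable and z stays in range W. *)
Lemma iterates_in_range : in_range W (z 0%N) -> zf 0%N = z 0%N ->
  forall k, in_range W (z k) /\ in_range W (zf k).
Proof.
move=> z0 zf0; elim=> [|k [zk zfk]]; first by rewrite zf0.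
have zgk : in_range W (zg k) by rewrite (mix k).2.2; apply: rangeD; apply: rangeZ.
have lg_gt0 : 0 < 1 + lambda * gamma by rewrite addr_gt0 ?mulr_gt0.
have zk1 : in_range W (z k.+1).
  have -> : z k.+1 = (1 + lambda * gamma)^-1 *: (z k + (lambda * gamma) *: zg k
                     - lambda *: (W *m grad_z_h mu (yg k) (zg k))).
    apply: (scalerI (lt0r_neq0 lg_gt0)); rewrite scalerA divff ?gt_eqF // scale1r.
    rewrite scalerDl scale1r {1}(z_update k); move: (W *m _) => g.
    by entrywise; ring.
  apply: rangeZ; apply: rangeB; last by apply: rangeZ; apply: rangeW.
  by apply: rangeD => //; apply: rangeZ.
by split=> //; rewrite (f_update k).2.2; apply: rangeD => //; apply: rangeZ; apply: rangeB.
Qed.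

Variables (xs ys zs : 'cV[R]_N).
Hypothesis ys_zs : ys + zs = - (mu / 2) *: xs.
Hypothesis W_xs : W *m xs = 0.

(* The y- and z-updates in error coordinates.  The updates are implicit in
   the new iterate, so substituting one of its occurrences suffices. *)
Lemma y_error_step k :
  let Yg := sigma *: (y k - ys) + (1 - sigma) *: (yf k - ys) in
  let Zg := sigma *: (z k - zs) + (1 - sigma) *: (zf k - zs) in
  (y k.+1 - ys) - (y k - ys)
  = (theta * beta) *: (Yg - (y k.+1 - ys)) - theta *: grad_y_h mu nu Yg Zg
    + (theta * nu) *: (y k.+1 - ys) - theta *: (x k.+1 - xs).
Proof.
rewrite /= !convex_shift -(mix k).2.1 -(mix k).2.2.
rewrite (grad_y_h_shift nu _ _ mu_gt0 ys_zs) {1}(xy_update k).2.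
by entrywise; ring.
Qed.

Lemma z_error_step k :
  let Yg := sigma *: (y k - ys) + (1 - sigma) *: (yf k - ys) in
  let Zg := sigma *: (z k - zs) + (1 - sigma) *: (zf k - zs) in
  (z k.+1 - zs) - (z k - zs)
  = (lambda * gamma) *: (Zg - (z k.+1 - zs)) - lambda *: (W *m grad_z_h mu Yg Zg).
Proof.
rewrite /= !convex_shift -(mix k).2.1 -(mix k).2.2.
rewrite (grad_z_h_shift _ _ mu_gt0 ys_zs) mulmxDr W_xs addr0 {1}(z_update k).
by entrywise; ring.
Qed.

Lemma averaged_error_step k :
  yf k.+1 - ys = (sigma *: (y k - ys) + (1 - sigma) *: (yf k - ys))
                 + sigma *: ((y k.+1 - ys) - (y k - ys)) /\
  zf k.+1 - zs = (sigma *: (z k - zs) + (1 - sigma) *: (zf k - zs))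
                 + sigma *: ((z k.+1 - zs) - (z k - zs)).
Proof.
rewrite !convex_shift (f_update k).2.1 (f_update k).2.2 (mix k).2.1 (mix k).2.2.
by split; entrywise; ring.
Qed.

End Algorithm3.

Theorem mainTheorem11 (R : realType) (n d : nat)
  (F : 'cV[R]_(n * d) -> R) (gradF : 'cV[R]_(n * d) -> 'cV[R]_(n * d)) (mu L : R)
  (W Wd : 'M[R]_(n * d)) (lmax lminp : R)
  (xs : 'cV[R]_(n * d))
  (eta theta lambda alpha beta gamma nu tau sigma : R)
  (x y z xf yf zf xg yg zg : nat -> 'cV[R]_(n * d)) :
  (* F differentiable, mu-strongly convex, L-smooth, 0 < mu <= L *)
  has_gradient F gradF -> 0 < mu -> mu <= L ->
  strongly_convex F gradF mu -> L_smooth gradF L ->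
  (* W symmetric PSD with kernel the consensus space *)
  W^T = W -> (forall v : 'cV[R]_(n * d), 0 <= (v^T *m W *m v) 0 0) ->
  (forall v : 'cV[R]_(n * d), W *m v = 0 <-> consensus v) ->
  (* largest eigenvalue and smallest positive eigenvalue of W *)
  eigenvalue W lmax -> (forall a, eigenvalue W a -> a <= lmax) ->
  eigenvalue W lminp -> 0 < lminp ->
  (forall a, eigenvalue W a -> 0 < a -> lminp <= a) ->
  (* Wd = W^dagger, inverse of W restricted to range(W) *)
  is_range_inverse W Wd ->
  (* xs = x^*, the (unique) minimizer of F over ker W *)
  W *m xs = 0 -> (forall v, W *m v = 0 -> F xs <= F v) ->
  (* parameters *)
  0 < eta -> 0 < theta -> 0 < lambda -> 0 < alpha -> 0 < beta -> 0 < gamma -> 0 < nu ->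
  0 < tau < 1 -> 0 < sigma < 1 ->
  theta <= (sigma * (4 / mu + nu))^-1 ->
  lambda <= (4 * sigma * lmax / mu)^-1 ->
  beta <= Num.min (mu^-1) (nu / 3) ->
  gamma <= lminp * beta ->
  (* Algorithm 3 *)
  in_range W (z 0%N) ->
  xf 0%N = x 0%N -> yf 0%N = y 0%N -> zf 0%N = z 0%N ->
  (forall k,
     xg k = tau *: x k + (1 - tau) *: xf k /\
     yg k = sigma *: y k + (1 - sigma) *: yf k /\
     zg k = sigma *: z k + (1 - sigma) *: zf k) ->
  (forall k,
     x k.+1 = x k + (eta * alpha) *: (xg k - x k.+1) - eta *: grad_r gradF mu (xg k)
              + eta *: y k.+1 /\
     y k.+1 = y k + (theta * beta) *: (yg k - y k.+1) - theta *: grad_y_h mu nu (yg k) (zg k)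
              + (theta * nu) *: y k.+1 - theta *: x k.+1) ->
  (forall k,
     z k.+1 = z k + (lambda * gamma) *: (zg k - z k.+1)
              - lambda *: (W *m grad_z_h mu (yg k) (zg k))) ->
  (forall k,
     xf k.+1 = xg k + (2 * tau / (2 - tau)) *: (x k.+1 - x k) /\
     yf k.+1 = yg k + sigma *: (y k.+1 - y k) /\
     zf k.+1 = zg k + sigma *: (z k.+1 - z k)) ->
  let ys := gradF xs - (mu / 2) *: xs in
  let zs := - gradF xs in
  forall k : nat,
    sqn_M Wd theta lambda (y k.+1 - ys) (z k.+1 - zs)
    <= sqn_M Wd theta lambda (y k - ys) (z k - zs)
       - (beta - 2 * nu) * sqn (y k.+1 - ys)
       - gamma * sqn_dag Wd (z k.+1 - zs)
       + (2 * (1 - sigma) / sigma) * D_h mu nu (yf k) (zf k) ys zs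
       - (2 / sigma) * D_h mu nu (yf k.+1) (zf k.+1) ys zs
       - 2 * dotv (x k.+1 - xs) (y k.+1 - ys).
Proof.
move=> _ mu_gt0 _ F_sc F_smooth W_sym W_psd _ _ W_lmax _ _ W_lminp Wd_pinv W_xs xs_min
  _ theta_gt0 lambda_gt0 _ beta_gt0 gamma_gt0 nu_gt0 _ /andP [sigma_gt0 sigma_lt1]
  theta_le lambda_le beta_le gamma_le z0_range _ _ zf0 mix xy_update z_update f_update
  ys zs k.
have ys_zs : ys + zs = - (mu / 2) *: xs by rewrite /ys /zs addrAC subrr add0r scaleNr.
(* First-order optimality of xs puts zs = - grad F(xs) in range W. *)
have zs_range : in_range W zs.
  rewrite /zs -scaleN1r; apply: rangeZ; apply: range_of_orth_kernel => //.
  exact: grad_orthogonal_kernel F_sc mu_gt0 F_smooth W_xs xs_min.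
have z_range := iterates_in_range mix z_update f_update lambda_gt0 gamma_gt0 z0_range zf0.
have [[zk_range zfk_range] [zk1_range _]] := (z_range k, z_range k.+1).
have [Z0_range Zf_range Z1_range] : [/\ in_range W (z k - zs), in_range W (zf k - zs)
                                      & in_range W (z k.+1 - zs)] by split; apply: rangeB.
have [yf_step zf_step] := averaged_error_step mix f_update ys zs k.
rewrite !D_h_quadratic // yf_step zf_step.
apply: (one_step_descent W_sym W_psd W_lmax W_lminp Wd_pinv) => //.
- exact: (y_error_step mix xy_update mu_gt0 ys_zs k).
- exact: (z_error_step mix z_update mu_gt0 ys_zs W_xs k).
Qed.
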